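(* Let $q\ge3$ be a prime power, $1\le d\le e$, $0\le i\le d$, $1\le j\le d$, $h_{\max}=\min\{j,d-i\}$, and $s=b_{h_{\max}}(i,j)$. Then $$\tfrac14 q^{s}<|B_j(i)|<2q^{s}.$$
   Context: For integers $m\ge 0$ and $l$, ${m\brack l}=\prod_{t=1}^{l}\frac{q^{m-t+1}-1}{q^t-1}$ for $l\ge0$ and $0$ for $l<0$. For $0\le i,j\le d$, $$B_j(i)=\sum_{h=0}^{\min\{j,d-i\}}(-1)^{j-h}q^{eh+\binom{j-h}{2}}{d-h\brack d-j}{d-i\brack h}$$ (the eigenvalues of the bilinear forms graph $H_q(d,e,j)$ on $d\times e$ matrices over $\mathbb F_q$, adjacency meaning the difference has rank $j$). Also $b_h(i,j)=h(d+e-i-h)+(d-j)(j-h)+\binom{j-h}{2}$. *)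

From mathcomp Require Import all_boot all_order all_algebra.
Set Implicit Arguments. Unset Strict Implicit. Unset Printing Implicit Defensive.
Import Order.TTheory GRing.Theory Num.Theory.
Local Open Scope ring_scope.

Definition prime_power (q : nat) : Prop :=
  exists p k : nat, prime p /\ (0 < k)%N /\ q = (p ^ k)%N.

(* Gaussian binomial [m brack l] = prod_{t=1}^{l} (q^{m-t+1}-1)/(q^t-1), l >= 0,
   computed in rat.  (The exponent m+1-t is 0 when t = m+1, giving value 0
   for l > m, as in the paper's formula.) *)
Definition gauss (q m l : nat) : rat :=
  \prod_(1 <= t < l.+1) (((q%:R : rat) ^+ (m.+1 - t) - 1) / ((q%:R : rat) ^+ t - 1)).

(* Eigenvalue B_j(i) of the bilinear forms graph H_q(d,e,j). *)
Definition Beig (q d e i j : nat) : rat :=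
  \sum_(0 <= h < (minn j (d - i)).+1)
     (-1) ^+ (j - h) * (q%:R : rat) ^+ (e * h + 'C(j - h, 2))
       * gauss q (d - h) (d - j) * gauss q (d - i) h.

Definition bexp (d e h i j : nat) : nat :=
  (h * (d + e - i - h) + (d - j) * (j - h) + 'C(j - h, 2))%N.

From mathcomp Require Import all_boot all_order all_algebra.
From mathcomp Require Import ring lra zify.
Set Implicit Arguments. Unset Strict Implicit. Unset Printing Implicit Defensive.
Import Order.TTheory GRing.Theory Num.Theory.
Local Open Scope ring_scope.

(* Put H = min(j, d-i).  Pulling the sign (-1)^(j-H) out of the defining sum
   shows that |B_j(i)| is the alternating sum a_H - a_(H-1) + a_(H-2) - ...
   of the positive terms  a_h = q^(eh + C(j-h,2)) [d-h, d-j] [d-i, h].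
   The proof establishes, for an arbitrary base x >= 3 in a real field:
   1. Gaussian binomials: x^(l(m-l)) <= [m,l] < 2 x^(l(m-l)) for l <= m (the
      upper bound rests on prod_(t<=l) x^t/(x^t-1) < 2), and the two Pascal-type
      identities relating [m,l] to [m+1,l] and to [m,l+1].
   2. Alternating sums: if the terms are positive and 4 a_h < 3 a_(h+1), the
      alternating sum ending at a_N lies in (a_N/4, a_N].
   3. The terms a_h satisfy 4 a_h < 3 a_(h+1): the Pascal identities express
      a_h/a_(h+1) through powers of x, bounded by an elementary inequality.
   4. The top term satisfies x^s <= a_H < 2 x^s, since one of its two Gaussian
      binomials is [m,m] = 1 and the other is below twice its leading power.
   The theorem combines 2-4 at x = q; only q >= 3 is used, not that q is a
   prime power. *)

Section QBinomial.
Variable R : realFieldType.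
Variable x : R.
Hypothesis x_ge3 : 3 <= x.

Definition qbinom (m l : nat) : R :=
  \prod_(1 <= t < l.+1) ((x ^+ (m.+1 - t) - 1) / (x ^+ t - 1)).

Definition qden (l : nat) : R := \prod_(1 <= t < l.+1) (x ^+ t - 1).

Definition qpow (l : nat) : R := \prod_(1 <= t < l.+1) x ^+ t.

Lemma expr_ge1 n : 1 <= x ^+ n.
Proof. by apply: exprn_ege1; move: x_ge3; lra. Qed.

Lemma expr_gt0 n : 0 < x ^+ n.
Proof. by apply: exprn_gt0; move: x_ge3; lra. Qed.

Lemma exprS_ge3 n : 3 <= x ^+ n.+1.
Proof. by rewrite exprS; have := expr_ge1 n; move: x_ge3; nra. Qed.

Lemma qden_gt0 l : 0 < qden l.
Proof.
rewrite /qden big_nat_cond; apply: prodr_gt0 => -[|t] /andP[/andP[//= _ _] _].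
by have := exprS_ge3 t; lra.
Qed.

Lemma qpow_ge0 l : 0 <= qpow l.
Proof. by apply: prodr_ge0 => t _; exact: ltW (expr_gt0 t). Qed.

Lemma qpowS l : qpow l.+1 = qpow l * x ^+ l.+1.
Proof. by rewrite /qpow big_nat_recr. Qed.

Lemma qdenS l : qden l.+1 = qden l * (x ^+ l.+1 - 1).
Proof. by rewrite /qden big_nat_recr. Qed.

(* prod_(t=1..l) x^t/(x^t-1) < 2, via the invariant that this product is at
   most 2x^l/(x^l+1); this is where x >= 3 is needed. *)
Lemma qpow_lt2qden l : qpow l < 2 * qden l.
Proof.
suff inv : qpow l * (x ^+ l + 1) <= 2 * qden l * x ^+ l.
  by have := qden_gt0 l; have := expr_ge1 l; have := qpow_ge0 l; nra.
elim: l => [|l IH]; first by rewrite /qpow /qden !big_geq // expr0; lra.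
rewrite qpowS qdenS exprS.
have := qpow_ge0 l; have := qden_gt0 l; have := expr_ge1 l; have := x_ge3.
move: IH; set y := x ^+ l; set Q := qpow l; set D := qden l => IH x3 y1 D0 Q0.
have slack : 0 <= Q * (y * (x - 2) - 1) by apply: mulr_ge0 => //; nra.
have IHx : Q * (y + 1) * (x * y - 1) <= 2 * D * y * (x * y - 1).
  by apply: ler_wpM2r => //; nra.
nra.
Qed.

Lemma prod_scale k l (F : nat -> R) :
  \prod_(1 <= t < l.+1) (x ^+ k * F t) = x ^+ (l * k) * \prod_(1 <= t < l.+1) F t.
Proof. by rewrite big_split /= prodr_const_nat subn1 -exprM mulnC. Qed.

(* Reversing the numerator: [m,l] = prod_t (x^(m-l+t) - 1) / qden l, so that
   each factor (x^(m-l+t) - 1)/(x^t - 1) is compared with x^(m-l). *)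
Lemma qbinom_shifted m l : (l <= m)%N ->
  qbinom m l = (\prod_(1 <= t < l.+1) (x ^+ (m - l + t) - 1)) / qden l.
Proof.
move=> lm; rewrite /qbinom prodf_div; congr (_ / _).
rewrite big_nat_rev; apply: eq_big_nat => t /andP[t1 tl].
by congr (x ^+ _ - 1); lia.
Qed.

Lemma qbinom_lb m l : (l <= m)%N -> x ^+ (l * (m - l)) <= qbinom m l.
Proof.
move=> lm; rewrite qbinom_shifted // ler_pdivlMr ?qden_gt0 // /qden -prod_scale.
apply: ler_prod => t _; rewrite exprD.
have := expr_ge1 (m - l); have := expr_ge1 t; move=> ht hk.
by apply/andP; split; nra.
Qed.

Lemma qbinom_ub m l : (l <= m)%N -> qbinom m l < 2 * x ^+ (l * (m - l)).
Proof.
move=> lm; rewrite qbinom_shifted // ltr_pdivrMr ?qden_gt0 //.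
have num_le :
    \prod_(1 <= t < l.+1) (x ^+ (m - l + t) - 1) <= x ^+ (l * (m - l)) * qpow l.
  rewrite /qpow -prod_scale; apply: ler_prod => t _; rewrite exprD.
  have := expr_ge1 (m - l); have := expr_ge1 t; move=> ht hk.
  by apply/andP; split; nra.
apply: le_lt_trans num_le _.
have := qpow_lt2qden l; have := expr_gt0 (l * (m - l)); nra.
Qed.

Lemma qbinom_diag m : qbinom m m = 1.
Proof.
rewrite qbinom_shifted // subnn; under eq_bigr do rewrite add0n.
by rewrite divff // gt_eqF // qden_gt0.
Qed.

Lemma qbinomS m l :
  qbinom m l.+1 = qbinom m l * ((x ^+ (m - l) - 1) / (x ^+ l.+1 - 1)).
Proof. by rewrite /qbinom big_nat_recr //= subSS. Qed.

Lemma qbinom_shift_bottom m l :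
  qbinom m l.+1 * (x ^+ l.+1 - 1) = qbinom m l * (x ^+ (m - l) - 1).
Proof.
rewrite qbinomS -mulrA divfK // subr_eq0; apply/eqP => E.
by have := exprS_ge3 l; rewrite E; lra.
Qed.

Lemma qbinom_shift_top m l :
  qbinom m.+1 l * (x ^+ (m.+1 - l) - 1) = qbinom m l * (x ^+ m.+1 - 1).
Proof.
elim: l => [|l IH]; first by rewrite /qbinom !big_geq // !mul1r subn0.
rewrite !qbinomS subSS.
transitivity ((qbinom m.+1 l * (x ^+ (m.+1 - l) - 1)) *
  ((x ^+ (m - l) - 1) / (x ^+ l.+1 - 1))); first by ring.
by rewrite IH; ring.
Qed.

End QBinomial.

Section AlternatingSum.
Variable R : realDomainType.
Variable a : nat -> R.

Definition alt_sum (n : nat) : R := \sum_(0 <= h < n.+1) (-1) ^+ (n - h) * a h.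

Lemma alt_sum0 : alt_sum 0 = a 0.
Proof. by rewrite /alt_sum big_nat1 expr0 mul1r. Qed.

Lemma alt_sumS n : alt_sum n.+1 = a n.+1 - alt_sum n.
Proof.
rewrite /alt_sum big_nat_recr //= subnn expr0 mul1r addrC; congr (_ + _).
rewrite -sumrN; apply: eq_big_nat => h /andP[_ hn].
by rewrite subSn // exprS mulN1r mulNr.
Qed.

Lemma alt_sum_between N : (forall h, (h <= N)%N -> 0 < a h) ->
  (forall h, (h < N)%N -> a h <= a h.+1) ->
  forall n, (n <= N)%N -> 0 <= alt_sum n <= a n.
Proof.
move=> pos mono; elim=> [|n IH] nN; first by rewrite alt_sum0 ltW ?pos ?lexx.
have /andP[lo hi] := IH (ltnW nN).
by rewrite alt_sumS subr_ge0 lerBlDr lerDl lo (le_trans hi) ?mono.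
Qed.

(* With ratio at least 4/3 between consecutive terms, the last difference
   a_N - a_(N-1) already exceeds a_N/4. *)
Lemma alt_sum_bounds N : (forall h, (h <= N)%N -> 0 < a h) ->
  (forall h, (h < N)%N -> 4 * a h < 3 * a h.+1) ->
  a N < 4 * alt_sum N /\ alt_sum N <= a N.
Proof.
move=> pos ratio.
have mono h : (h < N)%N -> a h <= a h.+1.
  by move=> hN; have := ratio h hN; have := pos h (ltnW hN); lra.
have /andP[_ hi] := alt_sum_between pos mono (leqnn N); split => //.
case: N pos ratio mono hi => [|n] pos ratio mono _.
  by rewrite alt_sum0; have := pos 0%N isT; lra.
have /andP[_ hin] := alt_sum_between pos mono (leqnSn n).
by rewrite alt_sumS; have := ratio n (ltnSn n); lra.
Qed.

End AlternatingSum.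

(* The elementary inequality behind 4 a_h < 3 a_(h+1): with A = x^(j-h-1),
   B = x^(d-i-h), u = x^i, v = x^(h+1) and E = x^e.  The left side is below
   4ABuv, while (xA-1)(B-1) >= (4/9) xAB because xA, B >= 3. *)
Lemma ratio_ineq (R : realDomainType) (x A B u v E : R) :
  3 <= x -> 1 <= A -> 3 <= B -> 1 <= u -> 1 <= v -> u * v <= E ->
  4 * A * (B * u - 1) * (v - 1) < 3 * E * (x * A - 1) * (B - 1).
Proof.
move=> x3 A1 B3 u1 v1 uvE.
have lhs : 4 * A * (B * u - 1) * (v - 1) < 4 * (A * B) * (u * v).
  have : 0 < A * (B * u + v - 1) by apply: mulr_gt0; nra.
  nra.
have xA3 : 3 <= x * A.
  have : 0 <= (x - 3) * (A - 1) by apply: mulr_ge0; lra.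
  nra.
have rhs : 4 * (A * B) * (u * v) <= 3 * E * (x * A - 1) * (B - 1).
  have AB : 4 * (A * B) <= 3 * (x * A - 1) * (B - 1).
    have : 0 <= (x * A - 3) * (B - 3) by apply: mulr_ge0; lra.
    nra.
  have C0 : 0 <= 3 * ((x * A - 1) * (B - 1)) by rewrite mulr_ge0 // mulr_ge0 //; lra.
  have uv0 : 0 <= u * v by rewrite mulr_ge0 //; lra.
  have := ler_wpM2r uv0 AB; have := ler_wpM2l C0 uvE; lra.
lra.
Qed.

Section EigenvalueTerms.
Variable R : realFieldType.
Variable x : R.
Variables d e i j : nat.
Hypothesis x_ge3 : 3 <= x.
Hypothesis i_le_d : (i <= d)%N.
Hypothesis j_le_d : (j <= d)%N.
Hypothesis d_le_e : (d <= e)%N.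

Definition term (h : nat) : R :=
  x ^+ (e * h + 'C(j - h, 2)) * qbinom x (d - h) (d - j) * qbinom x (d - i) h.

Local Notation hmax := (minn j (d - i)).

Lemma term_gt0 h : (h <= hmax)%N -> 0 < term h.
Proof.
rewrite leq_min => /andP[hj hdi].
have pos m l : (l <= m)%N -> 0 < qbinom x m l.
  by move=> lm; apply: lt_le_trans (qbinom_lb x_ge3 lm); apply: expr_gt0.
by rewrite /term !mulr_gt0 ?expr_gt0 ?pos //; lia.
Qed.

(* The Pascal identities give a_h / a_(h+1) as an explicit quotient of
   polynomials in powers of x, written here without division. *)
Lemma term_step h : (h < hmax)%N ->
  term h * (x ^+ e * (x ^+ (j - h) - 1) * (x ^+ (d - i - h) - 1)) =
  term h.+1 * (x ^+ (j - h.+1) * (x ^+ (d - h) - 1) * (x ^+ h.+1 - 1)).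
Proof.
rewrite leq_min => /andP[hj hdi].
have powers : x ^+ (e * h + 'C(j - h, 2)) * x ^+ e =
    x ^+ (e * h.+1 + 'C(j - h.+1, 2)) * x ^+ (j - h.+1).
  rewrite -!exprD; congr (_ ^+ _).
  have -> : (j - h = (j - h.+1).+1)%N by lia.
  by rewrite binS bin1 mulnS; lia.
have top := qbinom_shift_top x (d - h.+1) (d - j).
have dh : ((d - h.+1).+1 = d - h)%N by lia.
have jh : (d - h - (d - j) = j - h)%N by lia.
rewrite dh jh in top.
have bottom := qbinom_shift_bottom x_ge3 (d - i) h.
rewrite /term.
transitivity ((x ^+ (e * h + 'C(j - h, 2)) * x ^+ e) *
  (qbinom x (d - h) (d - j) * (x ^+ (j - h) - 1)) *
  (qbinom x (d - i) h * (x ^+ (d - i - h) - 1))); first by ring.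
by rewrite powers top -bottom; ring.
Qed.

Lemma term_ratio h : (h < hmax)%N -> 4 * term h < 3 * term h.+1.
Proof.
move=> hH; have /andP[hj hdi] : (h < j)%N && (h < d - i)%N by rewrite -leq_min.
set A := x ^+ (j - h.+1); set B := x ^+ (d - i - h).
have xA : x ^+ (j - h) = x * A by rewrite -exprS; congr (_ ^+ _); lia.
have Bu : x ^+ (d - h) = B * x ^+ i by rewrite -exprD; congr (_ ^+ _); lia.
have B3 : 3 <= B by rewrite /B (_ : d - i - h = (d - i - h.+1).+1)%N ?exprS_ge3 //; lia.
have uvE : x ^+ i * x ^+ h.+1 <= x ^+ e.
  by rewrite -exprD ler_weXn2l //; [move: x_ge3; lra | lia].
have key := ratio_ineq x_ge3 (expr_ge1 x_ge3 (j - h.+1)) B3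
  (expr_ge1 x_ge3 i) (expr_ge1 x_ge3 h.+1) uvE.
have step := term_step hH; rewrite xA Bu -/A -/B in step.
set K := x ^+ e * (x * A - 1) * (B - 1) in step.
have xA3 : 3 <= x * A by rewrite -exprS exprS_ge3.
have K_gt0 : 0 < K by rewrite /K !mulr_gt0 ?expr_gt0 //; lra.
rewrite -/A -subr_gt0 in key; have pos := mulr_gt0 (term_gt0 hH) key.
by rewrite -(ltr_pM2r K_gt0) -mulrA step /K; lra.
Qed.

Lemma term_top_bounds :
  x ^+ bexp d e hmax i j <= term hmax < 2 * x ^+ bexp d e hmax i j.
Proof.
have Hj : (hmax <= j)%N := geq_minl j (d - i).
have Hdi : (hmax <= d - i)%N := geq_minr j (d - i).
have Hcases : hmax = j \/ hmax = (d - i)%N by rewrite /minn; case: ifP; [left | right].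
move: hmax Hj Hdi Hcases => H Hj Hdi Hcases.
set P := x ^+ (e * H + 'C(j - H, 2)).
have split_exp : x ^+ bexp d e H i j =
    P * x ^+ ((d - j) * (d - H - (d - j))) * x ^+ (H * (d - i - H)).
  rewrite /P -!exprD /bexp; congr (_ ^+ _).
  have -> : (d - H - (d - j) = j - H)%N by lia.
  have -> : (d + e - i - H = e + (d - i - H))%N by lia.
  by rewrite mulnDr [(H * e)%N]mulnC; lia.
have P_gt0 : 0 < P by apply: expr_gt0.
have Hdj : (d - j <= d - H)%N by lia.
rewrite split_exp /term -/P; apply/andP; split.
  have pow_ge0 n : 0 <= x ^+ n by exact: ltW (expr_gt0 x_ge3 n).
  apply: ler_pM; [exact: mulr_ge0 (ltW P_gt0) (pow_ge0 _) | exact: pow_ge0 |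
                  by rewrite ler_pM2l // (qbinom_lb x_ge3 Hdj) |
                  exact: (qbinom_lb x_ge3 Hdi)].
case: Hcases => HE; rewrite HE subnn muln0 expr0 (qbinom_diag x_ge3) !mulr1.
  by have := qbinom_ub x_ge3 Hdi; rewrite HE -(ltr_pM2l P_gt0); lra.
by have := qbinom_ub x_ge3 Hdj; rewrite HE -(ltr_pM2l P_gt0); lra.
Qed.

End EigenvalueTerms.

Lemma Beig_alt_sum q d e i j :
  Beig q d e i j = (-1) ^+ (j - minn j (d - i)) *
    alt_sum (term (q%:R : rat) d e i j) (minn j (d - i)).
Proof.
rewrite /Beig /alt_sum big_distrr; apply: eq_big_nat => h /andP[_ hH].
have sign : (-1) ^+ (j - h) =
    (-1) ^+ (j - minn j (d - i)) * (-1) ^+ (minn j (d - i) - h) :> rat.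
  by rewrite -exprD; congr (_ ^+ _); move: (geq_minl j (d - i)); lia.
by rewrite sign /term /gauss /qbinom /=; ring.
Qed.

Theorem lemma4p2 (q d e i j : nat) :
  prime_power q -> (3 <= q)%N ->
  (1 <= d)%N -> (d <= e)%N -> (i <= d)%N -> (1 <= j)%N -> (j <= d)%N ->
  let s := bexp d e (minn j (d - i)) i j in
  (1 / 4 : rat) * (q%:R : rat) ^+ s < `|Beig q d e i j| /\
  `|Beig q d e i j| < 2 * (q%:R : rat) ^+ s.
Proof.
move=> _ q_ge3 _ d_le_e i_le_d _ j_le_d s.
have x_ge3 : 3 <= (q%:R : rat) by rewrite (ler_nat _ 3 q).
have [lo hi] := alt_sum_bounds (term_gt0 x_ge3 i_le_d j_le_d d_le_e)
                               (term_ratio x_ge3 i_le_d j_le_d d_le_e).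
have /andP[top_lo top_hi] := term_top_bounds x_ge3 i_le_d j_le_d d_le_e.
rewrite Beig_alt_sum normrM normrX normrN1 expr1n mul1r ger0_norm; last by lra.
by rewrite /s; split; lra.
Qed.
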